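(* Let $\underline{X}=(X_n,p_n)$ be an inverse sequence of sets and $(T_{\underline{X}},v)$ its tree. If $\underline{X}$ is Mittag-Leffler, then for each $n_0$ there is $n_1>n_0$ such that for every $\alpha\in X_{n_0}$ extendable to $n_1$, the arc in $T_{\underline{X}}$ from the root $v$ to the vertex $\alpha$ is geodesically complete, i.e. it is contained in the image of an isometric embedding $F:[0,\infty)\to T_{\underline{X}}$ with $F(0)=v$.
   Context: An inverse sequence of sets $(X_n,p_n)_{n\ge1}$ has maps $p_n:X_{n+1}\to X_n$; $p_{nm}=p_n\circ\cdots\circ p_{m-1}:X_m\to X_n$. Its tree $T_{\underline{X}}$ is the geometric realization of the graph with vertices $\{v\}\sqcup\bigsqcup_nX_n$ and edges $\{x,p_n(x)\}$ ($x\in X_{n+1}$) and $\{x,v\}$ ($x\in X_1$), edges of length 1, path metric, rooted at $v$. $\underline{X}$ is Mittag-Leffler (ML) if for every $n_0$ there is $n_1>n_0$ such that for all $n>n_1$, $p_{n_0n}(X_n)=p_{n_0n_1}(X_{n_1})$. An element $\alpha\in X_{n_0}$ is extendable to $n_1$ if there is $\beta\in X_{n_1}$ with $p_{n_0n_1}(\beta)=\alpha$. *)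

From Stdlib Require Import Reals Lra Classical ClassicalEpsilon.
Open Scope R_scope.

Set Implicit Arguments.

(* Inverse sequence of sets, 0-based: the paper's X_1, X_2, ... are X 0, X 1, ...
   and p n : X (S n) -> X n is the bonding map. The root v is joined to X 0. *)
Section InverseSequenceTree.

Variable X : nat -> Type.
Variable p : forall n, X (S n) -> X n.

(* anc a b  <->  n <= m and p_{nm}(b) = a, for a : X n, b : X m. *)
Inductive anc : forall n, X n -> forall m, X m -> Prop :=
| anc_refl : forall n (a : X n), anc a a
| anc_step : forall n (a : X n) m (b : X m) (c : X (S m)),
    anc a b -> p c = b -> anc a c.

Definition mittag_leffler : Prop :=
  forall n0, exists n1, (n0 < n1)%nat /\
    forall n, (n1 < n)%nat -> forall a : X n0,
      (exists b : X n, anc a b) <-> (exists b : X n1, anc a b).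

Definition extendable n0 (a : X n0) (n1 : nat) : Prop :=
  exists b : X n1, anc a b.

(* Points of the geometric realization T_X: the root v, or a point of the
   edge from x : X n to its parent (p x, or v if n = 0), at distance t in
   [0,1) from x.  Pt n x 0 is the vertex x.  Edges have length 1. *)
Inductive point : Type :=
| Root : point
| Pt : forall n (x : X n) (t : R), 0 <= t < 1 -> point.

Definition depth (P : point) : R :=
  match P with
  | Root => 0
  | @Pt n _ t _ => INR n + 1 - t
  end.

Definition agree n (x : X n) m (y : X m) (k : nat) : Prop :=
  exists z : X k, anc z x /\ anc z y.

(* depth (number of levels) of the meet of the root paths of x and y:
   the unique h with  agree k <-> k < h  (the agreement levels form an
   initial segment of nat). *)
Definition meet_depth n (x : X n) m (y : X m) : nat :=
  epsilon (inhabits 0%nat)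
    (fun h => forall k, (k < h)%nat <-> agree x y k).

(* Path metric of the R-tree T_X:
   d(P,Q) = depth P + depth Q - 2 * depth(meet of the geodesics from v). *)
Definition tdist (P Q : point) : R :=
  match P, Q with
  | Root, _ => depth Q
  | _, Root => depth P
  | @Pt n x _ _, @Pt m y _ _ =>
      depth P + depth Q
      - 2 * Rmin (INR (meet_depth x y)) (Rmin (depth P) (depth Q))
  end.

Definition on_arc n0 (a : X n0) (P : point) : Prop :=
  match P with
  | Root => True
  | @Pt k z _ _ => anc z a
  end.

Definition isometric_ray (F : R -> point) : Prop :=
  F 0 = Root /\
  forall s t, 0 <= s -> 0 <= t -> tdist (F s) (F t) = Rabs (s - t).

Definition geodesically_complete_arc n0 (a : X n0) : Prop :=
  exists F : R -> point, isometric_ray F /\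
    forall P, on_arc a P -> exists s, 0 <= s /\ F s = P.

End InverseSequenceTree.

From Stdlib Require Import Reals Lra Lia ClassicalEpsilon ProofIrrelevance Eqdep_dec ZArith.
Open Scope R_scope.

(* Under Mittag-Leffler, an element [a] extendable to the stable level [n1]
   is extendable to every level, and every element extendable to every level
   has a preimage with the same property (apply Mittag-Leffler one level up).
   Iterating, [a] lies on a thread [(c_n)] with [p_n (c_{n+1}) = c_n].  The
   ray that runs from [v] through the vertices [c_0, c_1, ...] at unit speed
   is an isometric embedding of [0,oo) (the meet of [c_n] and [c_m] has depth
   [min n m + 1]) and passes through every point of the arc [v, a]. *)

Section InverseSequence.

Variable X : nat -> Type.
Variable p : forall n, X (S n) -> X n.

Local Notation anc a b := (anc X p _ a _ b).
Local Notation extendable a m := (extendable X p _ a m).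

Lemma anc_le {n} {a : X n} {m} {b : X m} : anc a b -> (n <= m)%nat.
Proof. induction 1; lia. Qed.

Lemma anc_trans {n} {a : X n} {m} {b : X m} {k} {c : X k} :
  anc a b -> anc b c -> anc a c.
Proof. intros Hab Hbc. induction Hbc; [exact Hab | econstructor; eauto]. Qed.

Lemma anc_parent n (y : X (S n)) : anc (p n y) y.
Proof. econstructor; [constructor | reflexivity]. Qed.

Lemma anc_uniq {k} (z z' : X k) {m} (b : X m) : anc z b -> anc z' b -> z = z'.
Proof.
  intros H; revert z'.
  induction H as [n a | n a m b c H IH Hc]; intros z' H';
    inversion H' as [n1 a1 E1 E2 E3 E4 | n1 a1 m1 b1 c1 H1 Hc1 E1 E2 E3 E4].
  - apply inj_pair2_eq_dec in E2, E4; try exact Nat.eq_dec. congruence.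
  - apply anc_le in H1; lia.
  - apply anc_le in H; lia.
  - subst. apply inj_pair2_eq_dec in E2, E4; try exact Nat.eq_dec. subst.
    apply IH, H1.
Qed.

Lemma exists_anc {m} (b : X m) k : (k <= m)%nat -> exists z : X k, anc z b.
Proof.
  revert b; induction m as [|m IH]; intros b Hk.
  - replace k with 0%nat by lia. exists b; constructor.
  - destruct (Nat.eq_dec k (S m)) as [->|Hk_ne]; [exists b; constructor|].
    destruct (IH (p m b)) as [z Hz]; [lia|].
    exists z; econstructor; eauto.
Qed.

Lemma extendable_le {n} {y : X n} {M} m :
  extendable y M -> (n <= m <= M)%nat -> extendable y m.
Proof.
  intros [z Hz] Hm.
  destruct (exists_anc z m) as [w Hw]; [lia|].
  destruct (exists_anc w n) as [y' Hy']; [lia|].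
  exists w. replace y with y'; [exact Hy'|].
  apply (anc_uniq y' y z); [eapply anc_trans|]; eassumption.
Qed.

Definition extendable_forever {n} (x : X n) : Prop :=
  forall m, (n <= m)%nat -> extendable x m.

Lemma extendable_stable_forever {n0} n1 (a : X n0) :
  (n0 <= n1)%nat ->
  (forall n, (n1 < n)%nat -> forall a : X n0, extendable a n <-> extendable a n1) ->
  extendable a n1 -> extendable_forever a.
Proof.
  intros Hn1 Hstable Ha m Hm.
  destruct (Nat.le_gt_cases m n1).
  - apply (extendable_le _ Ha); lia.
  - apply Hstable; assumption.
Qed.

Definition thread (c : forall n, X n) : Prop :=
  forall n m, (n <= m)%nat -> anc (c n) (c m).

(* [c n] is the ancestor at level [n] of [g n], which lives at level [n + n0]. *)
Lemma forward_thread {n0} {a : X n0} {g : forall k, X (k + n0)} :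
  g 0%nat = a -> (forall k, p _ (g (S k)) = g k) ->
  exists c, thread c /\ c n0 = a.
Proof.
  intros Hg0 Hg.
  assert (Hgk : forall k l, (k <= l)%nat -> anc (g k) (g l)).
  { induction 1; [constructor | econstructor; [eassumption | apply Hg]]. }
  pose (c n := proj1_sig (constructive_indefinite_description _
                 (exists_anc (g n) n (Nat.le_add_r n n0)))).
  assert (Hc : forall n, anc (c n) (g n)) by (intros n; apply proj2_sig).
  exists c; split.
  - intros n m Hnm.
    destruct (exists_anc (c m) n Hnm) as [w Hw].
    replace (c n) with w; [exact Hw|].
    apply (anc_uniq _ _ (g m)); [eapply anc_trans; eauto|].
    eapply anc_trans; [apply Hc | apply Hgk; lia].
  - apply (anc_uniq _ _ (g n0)); [apply Hc|].
    rewrite <- Hg0. exact (Hgk 0%nat n0 (Nat.le_0_l _)).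
Qed.

Section MittagLeffler.

Hypothesis ML : mittag_leffler X p.

(* [y] is the ancestor at level [S n] of a descendant of [x] lying beyond
   the stable level of [S n]. *)
Lemma extendable_forever_lift {n} (x : X n) :
  extendable_forever x -> exists y : X (S n), p n y = x /\ extendable_forever y.
Proof.
  intros Hx. destruct (ML (S n)) as [n1 [Hn1 Hstable]].
  destruct (Hx (S n1)) as [z Hz]; [lia|].
  destruct (exists_anc z (S n)) as [y Hy]; [lia|].
  exists y; split.
  - apply (anc_uniq _ _ z); [eapply anc_trans; [apply anc_parent | exact Hy] | exact Hz].
  - apply (extendable_stable_forever n1); [lia | exact Hstable|].
    apply (extendable_le _ (M := S n1)); [exists z; exact Hy | lia].
Qed.

Lemma extendable_forever_forward {n0} {a : X n0} :
  extendable_forever a ->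
  exists g : forall k, X (k + n0), g 0%nat = a /\ forall k, p _ (g (S k)) = g k.
Proof.
  intros Ha.
  pose (step n (x : {x : X n | extendable_forever x}) :=
    constructive_indefinite_description _ (extendable_forever_lift _ (proj2_sig x))).
  pose (g := fix g k : {y : X (k + n0) | extendable_forever y} :=
    match k with
    | O => exist _ a Ha
    | S k => let (y, Hy) := step _ (g k) in exist _ y (proj2 Hy)
    end).
  exists (fun k => proj1_sig (g k)); split; [reflexivity|].
  intros k; simpl. destruct (step _ (g k)) as [y Hy]. exact (proj1 Hy).
Qed.

Lemma extendable_forever_thread {n0} {a : X n0} :
  extendable_forever a -> exists c, thread c /\ c n0 = a.
Proof.
  intros Ha. destruct (extendable_forever_forward Ha) as [g [Hg0 Hg]].
  exact (forward_thread Hg0 Hg).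
Qed.

End MittagLeffler.

Lemma meet_depth_eq n (x : X n) m (y : X m) h :
  (forall k, (k < h)%nat <-> agree X p _ x _ y k) -> meet_depth X p _ x _ y = h.
Proof.
  intros Hh. unfold meet_depth.
  pose proof (epsilon_spec (inhabits 0%nat)
    (fun h => forall k, (k < h)%nat <-> agree X p _ x _ y k) (ex_intro _ h Hh)) as He.
  set (e := epsilon _ _) in *; clearbody e.
  destruct (Nat.lt_total e h) as [Hl|[Hl|Hl]]; [|exact Hl|].
  - apply Hh, He in Hl; lia.
  - apply He, Hh in Hl; lia.
Qed.

Lemma thread_meet_depth {c} : thread c ->
  forall n m, meet_depth X p _ (c n) _ (c m) = S (Nat.min n m).
Proof.
  intros Hc n m. apply meet_depth_eq. intros k; split.
  - intros Hk. exists (c k); split; apply Hc; lia.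
  - intros [z [Hzn Hzm]]. apply anc_le in Hzn, Hzm. lia.
Qed.

(* For [s > 0], [level s] is the [n] with [n < s <= n + 1]. *)
Definition level (s : R) : nat := Z.to_nat (- up (- s)).

Lemma level_spec {s} : 0 < s -> INR (level s) < s <= INR (level s) + 1.
Proof.
  intros Hs. destruct (archimed (- s)) as [Hup1 Hup2]. unfold level.
  assert (Hnn : (0 <= - up (- s))%Z).
  { enough (-1 < - up (- s))%Z by lia. apply lt_IZR. rewrite opp_IZR. lra. }
  rewrite INR_IZR_INZ, Z2Nat.id, opp_IZR by exact Hnn. lra.
Qed.

Lemma level_eq n s : INR n < s <= INR n + 1 -> level s = n.
Proof.
  intros Hn. assert (Hs : 0 < s) by (pose proof (pos_INR n); lra).
  pose proof (level_spec Hs) as Hl.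
  destruct (Nat.lt_total (level s) n) as [H|[H|H]]; [|exact H|];
    apply le_INR in H; rewrite S_INR in H; lra.
Qed.

Definition edge_point (c : forall n, X n) n {s} (H : INR n < s <= INR n + 1) : point X :=
  Pt X n (c n) (t := INR n + 1 - s) ltac:(destruct H; split; lra).

Lemma Pt_ext n (x : X n) t t' (Ht : 0 <= t < 1) (Ht' : 0 <= t' < 1) :
  t = t' -> Pt X n x Ht = Pt X n x Ht'.
Proof. intros ->. f_equal. apply proof_irrelevance. Qed.

Definition ray (c : forall n, X n) (s : R) : point X :=
  match Rlt_dec 0 s with
  | left Hs => edge_point c (level s) (level_spec Hs)
  | right _ => Root X
  end.

Lemma ray_0 c : ray c 0 = Root X.
Proof. unfold ray; destruct Rlt_dec as [H0|]; [exfalso; lra | reflexivity]. Qed.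

Lemma ray_isometric c : thread c -> isometric_ray p (ray c).
Proof.
  intros Hc. split; [apply ray_0|]. intros s t Hs Ht. unfold ray.
  destruct (Rlt_dec 0 s) as [Hs'|Hs'], (Rlt_dec 0 t) as [Ht'|Ht']; cbn;
    [|unfold Rabs; destruct Rcase_abs; lra ..].
  rewrite (thread_meet_depth Hc), S_INR.
  pose proof (level_spec Hs'); pose proof (level_spec Ht').
  assert (Hmin : s <= INR (Nat.min (level s) (level t)) + 1 \/
                 t <= INR (Nat.min (level s) (level t)) + 1)
    by (destruct (Nat.min_spec (level s) (level t)) as [[_ ->]|[_ ->]]; lra).
  unfold Rmin, Rabs; repeat destruct Rle_dec; destruct Rcase_abs; lra.
Qed.

Lemma ray_covers_arc c n0 : thread c ->
  forall P, on_arc p _ (c n0) P -> exists s, 0 <= s /\ ray c s = P.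
Proof.
  intros Hc [| k z t Ht] HP; [exists 0; split; [lra | apply ray_0]|].
  cbn in HP. pose proof (pos_INR k) as Hk0.
  exists (INR k + 1 - t); split; [lra|].
  assert (Hz : z = c k) by (apply (anc_uniq _ _ _ HP), Hc, (anc_le HP)).
  subst z. unfold ray. destruct Rlt_dec as [Hs|Hs]; [|exfalso; lra].
  assert (Hl : level (INR k + 1 - t) = k) by (apply level_eq; lra).
  unfold edge_point. generalize (level_spec Hs). rewrite Hl. intros H.
  apply Pt_ext. ring.
Qed.

End InverseSequence.

Theorem proposition7p7 (X : nat -> Type) (p : forall n, X (S n) -> X n) :
  mittag_leffler X p ->
  forall n0 : nat, exists n1 : nat, (n0 < n1)%nat /\
    forall a : X n0, @extendable X p n0 a n1 -> @geodesically_complete_arc X p n0 a.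
Proof.
  intros ML n0. destruct (ML n0) as [n1 [Hn1 Hstable]].
  exists n1; split; [exact Hn1|]. intros a Ha.
  assert (Hforever : extendable_forever X p a)
    by exact (extendable_stable_forever _ _ n1 _ (Nat.lt_le_incl _ _ Hn1) Hstable Ha).
  destruct (extendable_forever_thread _ _ ML Hforever) as [c [Hc <-]].
  exists (ray X c); split; [apply ray_isometric | apply ray_covers_arc]; exact Hc.
Qed.
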